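(* Let $S=\mathbb{K}[x_1,\dots,x_n]$ be a polynomial ring over a field $\mathbb{K}$, and let $\mathcal{C}$ be a clutter whose vertex set is a subset of $\{x_1,\dots,x_n\}$, with edge ideal $I(\mathcal{C})\subset S$. Then \[ \operatorname{fdepth}(S/I(\mathcal{C}))\ge \epsilon(\mathcal{C})+n-|V(\mathcal{C}^{\mathrm{red}})|. \]
   Context: A clutter $\mathcal{C}$ consists of a finite vertex set $V(\mathcal{C})$ and a collection $E(\mathcal{C})$ of subsets of $V(\mathcal{C})$ (edges), no edge containing another. Vertices are identified with variables; the edge ideal is $I(\mathcal{C})=(\prod_{x\in e}x : e\in E(\mathcal{C}))$. Two distinct vertices are neighbors if some edge contains both. A vertex is isolated if it lies in no edge; $\mathcal{C}^{\mathrm{red}}$ is the clutter obtained by removing isolated vertices. An edge is trivial if it has exactly one vertex. A set $F\subseteq E(\mathcal{C})$ is edgewise dominant if every vertex $v\in V(\mathcal{C}^{\mathrm{red}})$ that is neither contained in an edge of $F$ nor contained in a trivial edge has a neighbor contained in some edge of $F$; $\epsilon(\mathcal{C})=\min\{|F| : F\subseteq E(\mathcal{C}) \text{ edgewise dominant}\}$. For a finitely generated $\mathbb{Z}^n$-graded $S$-module $M$, a prime filtration is a chain $0=M_0\subset M_1\subset\cdots\subset M_m=M$ of $\mathbb{Z}^n$-graded submodules with $M_i/M_{i-1}\cong (S/P_i)(-\mathbf{a}_i)$ for some $\mathbf{a}_i\in\mathbb{Z}^n$ and monomial prime ideals $P_i$; its filtration depth is $\min_i \dim(S/P_i)$, and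 $\operatorname{fdepth}(M)$ is the maximum of the filtration depths of all prime filtrations of $M$. *)

From HB Require Import structures.
From mathcomp Require Import all_boot all_order all_algebra.
From mathcomp Require Export mpoly.
Set Implicit Arguments. Unset Strict Implicit. Unset Printing Implicit Defensive.
Import GRing.Theory.
Local Open Scope ring_scope.

(* Variables x_1..x_n are indexed by 'I_n.  A clutter on a subset of the
   variables is given by a vertex set V : {set 'I_n} and an edge set
   E : {set {set 'I_n}}. *)

Section Clutter.
Variable n : nat.

Definition is_clutter (V : {set 'I_n}) (E : {set {set 'I_n}}) : Prop :=
  (forall e, e \in E -> e \subset V) /\
  (forall e f, e \in E -> f \in E -> e \subset f -> e = f).

Definition Vred (E : {set {set 'I_n}}) : {set 'I_n} := \bigcup_(e in E) e.

Definition neighbors (E : {set {set 'I_n}}) (v w : 'I_n) : bool :=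
  (v != w) && [exists e in E, (v \in e) && (w \in e)].

Definition edgewise_dominant (E F : {set {set 'I_n}}) : bool :=
  (F \subset E) &&
  [forall v in Vred E,
     ((~~ [exists f in F, v \in f]) && ([set v] \notin E)) ==>
     [exists w, neighbors E v w && [exists f in F, w \in f]]].

(* epsilon(C) = min |F| over edgewise dominant F; E itself is edgewise
   dominant, so #|E| is an upper bound used as the neutral element. *)
Definition epsilon (E : {set {set 'I_n}}) : nat :=
  \big[minn/#|E|]_(F in powerset E | edgewise_dominant E F) #|F|.
End Clutter.

Section Ideals.
Variables (n : nat) (K : fieldType).
Local Notation S := {mpoly K[n]}.

Definition is_ideal (J : S -> Prop) : Prop :=
  J 0 /\ (forall p q, J p -> J q -> J (p + q)) /\
  (forall s p, J p -> J (s * p)).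

(* Z^n-graded (= monomial) ideal: closed under taking homogeneous
   components, i.e. terms c * x^m. *)
Definition is_graded (J : S -> Prop) : Prop :=
  forall p (m : 'X_{1..n}), J p -> J ((p@_m) *: 'X_[m]).

Definition edge_ideal (E : {set {set 'I_n}}) (p : S) : Prop :=
  exists q : {set 'I_n} -> S, p = \sum_(e in E) q e * \prod_(i in e) 'X_i.

Definition mon_prime (Q : {set 'I_n}) (p : S) : Prop :=
  exists q : 'I_n -> S, p = \sum_(i in Q) q i * 'X_i.

(* Krull dimension of S / P_Q *)
Definition dim_quot_mon_prime (Q : {set 'I_n}) : nat := n - #|Q|.

(* Graded submodules of M = S/I are J/I with J a graded ideal containing I.
   Step i of the chain: M_{i+1}/M_i = J (i+1) / J i is isomorphic, as a
   Z^n-graded module, to (S/P_Q)(-a); equivalently (the image of 1 being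
   the class of x^a up to a nonzero scalar): J (i+1) = J i + S x^a and
   (J i : x^a) = P_Q. *)
Definition filtration_step (J : nat -> S -> Prop) (i : nat)
    (Q : {set 'I_n}) (a : 'X_{1..n}) : Prop :=
  (forall p, J i.+1 p <-> exists r s, J i r /\ p = r + s * 'X_[a]) /\
  (forall s, J i (s * 'X_[a]) <-> mon_prime Q s).

(* A prime filtration 0 = M_0 ⊂ ... ⊂ M_m = S/I, encoded by ideals
   I = J 0 ⊆ J 1 ⊆ ... ⊆ J m = S, whose filtration depth
   (min_i dim S/P_i) is at least k. *)
Definition prime_filtration_depth_ge (I : S -> Prop) (m : nat)
    (J : nat -> S -> Prop) (k : nat) : Prop :=
  (forall p, J 0%N p <-> I p) /\
  (forall p, J m p) /\
  (forall i, (i <= m)%N -> is_ideal (J i) /\ is_graded (J i)) /\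
  (forall i p, (i < m)%N -> J i p -> J i.+1 p) /\
  (forall i, (i < m)%N -> exists Q a,
      filtration_step J i Q a /\ (k <= dim_quot_mon_prime Q)%N).

(* fdepth(S/I) >= k : some prime filtration has filtration depth >= k
   (fdepth is the maximum of the filtration depths). *)
Definition fdepth_ge (I : S -> Prop) (k : nat) : Prop :=
  exists m J, prime_filtration_depth_ge I m J k.
End Ideals.

From HB Require Import structures.
From mathcomp Require Import all_boot all_order all_algebra.
From mathcomp Require Import mpoly.
From mathcomp Require Import zify ring.
Set Implicit Arguments. Unset Strict Implicit. Unset Printing Implicit Defensive.
Import Order.TTheory GRing.Theory.

(* Induction on the number of vertices lying in an edge with at least two
   elements.  Pick such a vertex v, with neighbours y_1, ..., y_r, and put
   I_k = I(C) + (x_{y_1}, ..., x_{y_{k-1}}).  The exact sequences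
   0 -> S/(I_k : x_{y_k}) -> S/I_k -> S/I_{k+1} -> 0 splice prime filtrations,
   so fdepth(S/I(C)) is at least the minimum of the fdepths of the
   S/(I_k : x_{y_k}) and of S/I_{r+1}.  These are edge ideals of clutters (the
   minimal sets of a contraction, resp. of C with the singletons {y_k} added)
   in which y_k, resp. v, is isolated, so the induction hypothesis applies.  A
   dominating set of such a smaller clutter lifts to one of C once an edge
   through each newly isolated vertex is added, which is exactly compensated by
   the drop in |V(C^red)|.  When all edges are singletons, I(C) is the monomial
   prime generated by V(C^red) and epsilon(C) = 0. *)

Section Clutters.
Variable n : nat.
Implicit Types (E G C X F : {set {set 'I_n}}) (e f : {set 'I_n}) (u v w y z : 'I_n).

Lemma neighbors_sym E v w : neighbors E v w -> neighbors E w v.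
Proof.
case/andP=> ne_vw /exists_inP[e eE /andP[ve we]].
by rewrite /neighbors eq_sym ne_vw; apply/exists_inP; exists e; rewrite ?we.
Qed.

Lemma neighbors_edge E v w :
  neighbors E v w -> exists2 e, e \in E & (v \in e) && (w \in e).
Proof. by case/andP=> _ /exists_inP. Qed.

Lemma neighbors_neq E v w : neighbors E v w -> v != w.
Proof. by case/andP. Qed.

Lemma edgewise_dominant_self E : edgewise_dominant E E.
Proof.
rewrite /edgewise_dominant subxx; apply/forall_inP => v /bigcupP[e eE ve].
by apply/implyP => /andP[/exists_inP[]]; exists e.
Qed.

Lemma epsilon_le E F : edgewise_dominant E F -> epsilon E <= #|F|.
Proof.
move=> domF; apply: (@bigmin_le_cond _ nat).
by rewrite domF powersetE andbT; case/andP: domF.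
Qed.

Lemma epsilon_attained E : exists2 F, edgewise_dominant E F & #|F| = epsilon E.
Proof.
pose P := [pred F | (F \in powerset E) && edgewise_dominant E F].
have PE : P E by rewrite /= powersetE subxx edgewise_dominant_self.
have P_le F : P F -> #|F| <= #|E|.
  by case/andP; rewrite powersetE => /subset_leq_card.
have [F /andP[_ domF] epsF] := @eq_bigmin _ nat _ #|E| E P (fun F => #|F|) PE P_le.
by exists F; rewrite // -epsF.
Qed.

Definition refines C E := [forall f in C, [exists e in E, f \subset e]].

Lemma refinesP C E :
  reflect (forall f, f \in C -> exists2 e, e \in E & f \subset e) (refines C E).
Proof.
apply: (iffP forall_inP) => CE f /CE; first by case/exists_inP=> e; exists e.
by case=> e eE fe; apply/exists_inP; exists e.
Qed.

Lemma refines_trans C G E : refines C G -> refines G E -> refines C E.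
Proof.
move=> /refinesP CG /refinesP GE; apply/refinesP => f /CG[g /GE[e eE ge] fg].
by exists e; last exact: subset_trans fg ge.
Qed.

Lemma Vred_refines C E : refines C E -> Vred C \subset Vred E.
Proof.
move=> /refinesP CE; apply/subsetP => w /bigcupP[f /CE[e eE fe] wf].
by apply/bigcupP; exists e; rewrite ?(subsetP fe).
Qed.

Section EpsilonTransfer.
Variables (E C : {set {set 'I_n}}) (es : {set 'I_n}) (u : 'I_n).
Hypothesis C_lift : refines C E.
Hypotheses (es_edge : es \in E) (u_es : u \in es) (u_isolated : u \notin Vred C).
Hypothesis C_singletons : forall w,
  [set w] \in C -> [set w] \notin E -> exists2 z, z \in es & neighbors E w z.

(* Choosing [es] for [u] puts [es] in the lifted dominating set, where it
   dominates the singleton edges of C that are not edges of E. *)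
Let lift f := odflt es [pick e in E | f \subset e].
Let cover w := if w == u then es else odflt es [pick e in E | w \in e].

Lemma lift_edge f : f \in C -> lift f \in E /\ f \subset lift f.
Proof.
move=> fC; rewrite /lift; case: pickP => [e /andP[eE fe] //|none].
by have [e eE fe] := refinesP _ _ C_lift f fC; have := none e; rewrite eE fe.
Qed.

Lemma cover_edge w : w \in Vred E -> cover w \in E /\ w \in cover w.
Proof.
rewrite /cover; case: eqP => [-> //|_] /bigcupP[e eE we].
by case: pickP => [e' /andP[] //|none]; have := none e; rewrite eE we.
Qed.

Lemma neighbors_lift v w : neighbors C v w -> neighbors E v w.
Proof.
case/andP=> ne_vw /exists_inP[f fC /andP[vf wf]]; rewrite /neighbors ne_vw.
by have [eE /subsetP fe] := lift_edge fC; apply/exists_inP; exists (lift f); rewrite ?fe.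
Qed.

Lemma edgewise_dominant_lift FC : edgewise_dominant C FC ->
  edgewise_dominant E (lift @: FC :|: cover @: (Vred E :\: Vred C)).
Proof.
case/andP=> /subsetP FC_C /forall_inP domFC.
set F := _ :|: _; have inF_lift f : f \in FC -> lift f \in F.
  by move=> fFC; rewrite inE imset_f.
have inF_cover w : w \in Vred E :\: Vred C -> cover w \in F.
  by move=> wl; rewrite inE orbC imset_f.
apply/andP; split.
  apply/subsetP => e /setUP[/imsetP[f /FC_C /lift_edge[liftE _] ->] //|].
  by case/imsetP=> w /setDP[wE _] ->; have [] := cover_edge wE.
apply/forall_inP => v vE; apply/implyP => /andP[/exists_inP notcov nvE].
have [vC|vC] := boolP (v \in Vred C); last first.
  by case: notcov; exists (cover v); [apply: inF_cover; rewrite inE vC | case: (cover_edge vE)].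
have esF : es \in F.
  have ul : u \in Vred E :\: Vred C.
    by rewrite inE u_isolated; apply/bigcupP; exists es.
  by have := inF_cover u ul; rewrite /cover eqxx.
have [vsC|vsC] := boolP ([set v] \in C).
  have [z zes vz] := C_singletons vsC nvE.
  by apply/existsP; exists z; rewrite vz; apply/exists_inP; exists es.
have /implyP := domFC v vC; rewrite vsC andbT.
case/(_ _)/existsP=> [|w /andP[vw /exists_inP[f fFC wf]]].
  apply/exists_inP => -[f fFC vf]; case: notcov; exists (lift f); first exact: inF_lift.
  by have [_ /subsetP] := lift_edge (FC_C f fFC); apply.
apply/existsP; exists w; rewrite neighbors_lift //; apply/exists_inP; exists (lift f).
  exact: inF_lift.
by have [_ /subsetP] := lift_edge (FC_C f fFC); apply.
Qed.

Lemma epsilon_transfer : epsilon E + #|Vred C| <= epsilon C + #|Vred E|.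
Proof.
have [FC domFC <-] := epsilon_attained C; have VCE := Vred_refines C_lift.
rewrite -(subnK (subset_leq_card VCE)) addnA leq_add2r -cardsDS //.
apply: leq_trans (epsilon_le (edgewise_dominant_lift domFC)) _.
apply: leq_trans (leq_card_setU _ _).1 _.
exact: leq_add (leq_imset_card _ _) (leq_imset_card _ _).
Qed.

End EpsilonTransfer.
End Clutters.

Section ClutterOperations.
Variable n : nat.
Implicit Types (E G C X : {set {set 'I_n}}) (e f g : {set 'I_n}) (s : seq 'I_n)
  (v w y z : 'I_n).

Definition adjoin_singletons G s := G :|: [set [set z] | z in s].

Lemma adjoin_singletons_nil G : adjoin_singletons G [::] = G.
Proof.
by apply/setP => e; rewrite inE; case: imsetP => [[z]|]; rewrite ?orbF.
Qed.

Lemma adjoin_singletons_cons G y s :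
  adjoin_singletons G (y :: s) = adjoin_singletons (G :|: [set [set y]]) s.
Proof.
apply/setP => e; rewrite !in_setU in_set1 -orbA; congr (_ || _).
apply/imsetP/orP => [[z]|[/eqP->|/imsetP[z zs ->]]].
- by rewrite inE => /orP[/eqP->|zs] ->; [left | right; apply: imset_f].
- by exists y; rewrite ?inE ?eqxx.
- by exists z; rewrite ?inE ?zs ?orbT.
Qed.

Lemma adjoin_singletons_refines E s :
  {subset s <= Vred E} -> refines (adjoin_singletons E s) E.
Proof.
move=> sE; apply/refinesP => f /setUP[fE|/imsetP[z /sE /bigcupP[e eE ze] ->]].
  by exists f.
by exists e; rewrite ?sub1set.
Qed.

Definition contract (E : {set {set 'I_n}}) (j : 'I_n) := [set e :\ j | e in E].

Lemma contract_refines X y : refines (contract X y) X.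
Proof. by apply/refinesP => _ /imsetP[g gX ->]; exists g; rewrite ?subD1set. Qed.

Lemma notin_Vred_contract X y : y \notin Vred (contract X y).
Proof. by apply/bigcupP => -[_ /imsetP[g _ ->]]; rewrite !inE eqxx. Qed.

Definition minimal_sets X := [set e | minset (fun f => f \in X) e].

Lemma minimal_sets_sub X e : e \in minimal_sets X -> e \in X.
Proof. by rewrite inE => /minsetp. Qed.

Lemma minimal_sets_min X e f :
  e \in minimal_sets X -> f \in X -> f \subset e -> f = e.
Proof. by rewrite inE => /minsetinf; apply. Qed.

Lemma minimal_sets_exists X e :
  e \in X -> exists2 f, f \in minimal_sets X & f \subset e.
Proof. by case/minset_exists => f minf fe; exists f; rewrite ?inE. Qed.

Lemma minimal_sets_refines X : refines (minimal_sets X) X.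
Proof. by apply/refinesP => f /minimal_sets_sub fX; exists f. Qed.

Lemma minimal_sets_clutter X : is_clutter setT (minimal_sets X).
Proof.
split=> [e _|e f /minimal_sets_sub eX fmin]; first exact: subsetT.
exact: minimal_sets_min fmin eX.
Qed.

Definition nontrivial_vertices E := \bigcup_(e in E | 1 < #|e|) e.

Lemma nontrivial_vertices_lt C E y :
  nontrivial_vertices C \subset nontrivial_vertices E :\ y ->
  y \in nontrivial_vertices E ->
  #|nontrivial_vertices C| < #|nontrivial_vertices E|.
Proof.
by move=> /subset_leq_card CE yE; rewrite (cardsD1 y (nontrivial_vertices E)) yE add1n ltnS.
Qed.

Lemma card_Vred_le E : #|Vred E| <= n.
Proof. by rewrite -[X in _ <= X]card_ord max_card. Qed.

End ClutterOperations.

Local Open Scope ring_scope.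

Section MonomialIdeals.
Variables (n : nat) (K : fieldType).
Local Notation S := {mpoly K[n]}.

Lemma mcoeffMXE (p : S) b m :
  (p * 'X_[b])@_m = if (b <= m)%MM then p@_(m - b) else 0.
Proof.
case: ifP => [le_bm|nle_bm]; first by rewrite -{1}(submK le_bm) addmC mcoeffMX.
rewrite {1}(mpolyE p) mulr_suml raddf_sum /= big1 // => k _.
rewrite -scalerAl -mpolyXD mcoeffZ mcoeffX.
by case: eqP => [e|_]; [rewrite -e lem_addl in nle_bm | rewrite mulr0].
Qed.

Definition monomial_ideal (T : finType) (A : {set T}) (b : T -> 'X_{1..n})
    (p : S) : Prop :=
  exists q : T -> S, p = \sum_(t in A) q t * 'X_[b t].

Lemma monomial_ideal_is_ideal (T : finType) (A : {set T}) b :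
  is_ideal (monomial_ideal A b).
Proof.
split; first by exists (fun _ => 0); rewrite big1 // => t _; rewrite mul0r.
split=> [p q [f ->] [g ->]|s p [f ->]].
  by exists (fun t => f t + g t); rewrite -big_split; apply: eq_bigr => t _; rewrite mulrDl.
by exists (fun t => s * f t); rewrite mulr_sumr; apply: eq_bigr => t _; rewrite mulrA.
Qed.

Lemma monomial_ideal_gen (T : finType) (A : {set T}) b t s :
  t \in A -> monomial_ideal A b (s * 'X_[b t]).
Proof.
move=> tA; exists (fun t' => if t' == t then s else 0).
by rewrite (bigD1 t) //= eqxx big1 ?addr0 // => t' /andP[_ /negbTE ->]; rewrite mul0r.
Qed.

Lemma monomial_idealP (T : finType) (A : {set T}) b p :
  monomial_ideal A b p <->
  forall m, p@_m != 0 -> exists2 t, t \in A & (b t <= m)%MM.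
Proof.
split=> [[q ->] m|divp].
  have [/exists_inP[t tA le_bm] _|] := boolP [exists t in A, b t <= m]%MM.
    by exists t.
  rewrite negb_exists_in => /forall_inP nodiv.
  rewrite raddf_sum big1 ?eqxx //= => t /nodiv.
  by rewrite mcoeffMXE => /negbTE ->.
have [mi0 [miD _]] := monomial_ideal_is_ideal A b.
rewrite (mpolyE p) big_seq; apply: big_ind => // m.
rewrite mcoeff_msupp => /divp [t tA le_bm].
by rewrite -(submK le_bm) mpolyXD scalerAl; apply: monomial_ideal_gen.
Qed.

Lemma is_graded_support (P : S -> Prop) (D : 'X_{1..n} -> Prop) :
  (forall p, P p <-> forall m, p@_m != 0 -> D m) -> is_graded P.
Proof.
move=> PE p m /PE Pp; apply/PE => k; rewrite mcoeffZ mcoeffX.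
by have [<-|_] := eqVneq m k; rewrite ?mulr1 ?mulr0 ?eqxx //; apply: Pp.
Qed.

Definition mnm_support (m : 'X_{1..n}) : {set 'I_n} := [set i | m i != 0%N].

Definition mnm_of_set (e : {set 'I_n}) : 'X_{1..n} := (\sum_(i in e) U_(i))%MM.

Lemma mnm_of_setE e i : mnm_of_set e i = (i \in e).
Proof.
rewrite /mnm_of_set mnm_sumE; have [ie|nie] := boolP (i \in e).
  by rewrite (bigD1 i) //= mnm1E eqxx big1 // => k /andP[_ /negbTE]; rewrite mnm1E eq_sym => ->.
by rewrite big1 // => k ke; rewrite mnm1E; apply/eqP; rewrite eqb0; apply: contraNneq nie => <-.
Qed.

Lemma lem_mnm_of_set e m : (mnm_of_set e <= m)%MM = (e \subset mnm_support m).
Proof.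
apply/mnm_lepP/subsetP => [le_em i ie|sub i].
  by have := le_em i; rewrite mnm_of_setE ie inE lt0n.
by rewrite mnm_of_setE; case: (boolP (i \in e)) => // /sub; rewrite inE lt0n.
Qed.

Lemma prod_mpolyX_set (e : {set 'I_n}) :
  \prod_(i in e) ('X_i : S) = 'X_[mnm_of_set e].
Proof.
by rewrite /mnm_of_set (big_morph (fun m => 'X_[m] : S) (@mpolyXD _ _) (@mpolyX0 _ _)).
Qed.

Lemma edge_idealP (E : {set {set 'I_n}}) p :
  @edge_ideal n K E p <->
  forall m, p@_m != 0 -> [exists e in E, e \subset mnm_support m].
Proof.
have -> : @edge_ideal n K E p <-> monomial_ideal E mnm_of_set p.
  by split=> -[q ->]; exists q; apply: eq_bigr => e _; rewrite prod_mpolyX_set.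
rewrite monomial_idealP; split=> divp m /divp.
  by case=> e eE; rewrite lem_mnm_of_set => sub; apply/exists_inP; exists e.
by case/exists_inP => e eE sub; exists e; rewrite ?lem_mnm_of_set.
Qed.

Lemma mon_primeP (Q : {set 'I_n}) p :
  @mon_prime n K Q p <-> forall m, p@_m != 0 -> [exists i in Q, m i != 0%N].
Proof.
have -> : @mon_prime n K Q p <-> monomial_ideal Q (fun i => U_(i)%MM) p by [].
rewrite monomial_idealP.
split=> divp m /divp.
  by case=> i iQ; rewrite lep1mP => mi; apply/exists_inP; exists i.
by case/exists_inP => i iQ mi; exists i; rewrite ?lep1mP.
Qed.

Lemma edge_ideal_is_ideal (E : {set {set 'I_n}}) : is_ideal (@edge_ideal n K E).
Proof.
split; first by apply/edge_idealP => m; rewrite mcoeff0 eqxx.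
split=> [p q /edge_idealP Ip /edge_idealP Iq|s p [q ->]].
  apply/edge_idealP => m; rewrite mcoeffD.
  by have [/eqP pm0|/Ip //] := boolP (p@_m == 0); rewrite pm0 add0r => /Iq.
by exists (fun e => s * q e); rewrite mulr_sumr; apply: eq_bigr => e _; rewrite mulrA.
Qed.

Lemma edge_ideal_graded (E : {set {set 'I_n}}) : is_graded (@edge_ideal n K E).
Proof. exact: is_graded_support (@edge_idealP E). Qed.

Lemma mnm_supportD1 m (j : 'I_n) : mnm_support (m + U_(j))%MM = j |: mnm_support m.
Proof.
apply/setP => i; rewrite !inE mnmDE mnm1E.
by have [<-|_] := eqVneq j i; rewrite /= ?addn1 ?addn0.
Qed.

Lemma edge_ideal_colon (E : {set {set 'I_n}}) j p :
  @edge_ideal n K E ('X_j * p) <-> @edge_ideal n K (contract E j) p.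
Proof.
rewrite !edge_idealP; split=> divp m.
  rewrite -(mcoeffMX p U_(j)) mulrC addmC => /divp /exists_inP[e eE].
  rewrite mnm_supportD1 -subDset => sub; apply/exists_inP.
  by exists (e :\ j) => //; apply: imset_f.
rewrite mulrC mcoeffMXE; case: ifP => [le_jm|]; last by rewrite eqxx.
move=> /divp /exists_inP[_ /imsetP[e eE ->]]; rewrite subDset -mnm_supportD1.
by rewrite submK // => sub; apply/exists_inP; exists e.
Qed.

Lemma edge_ideal_addX (E : {set {set 'I_n}}) j p :
  (exists r s, @edge_ideal n K E r /\ p = r + s * 'X_j) <->
  @edge_ideal n K (E :|: [set [set j]]) p.
Proof.
split=> [[r [s [/edge_idealP Ir ->]]]|[q ->]].
  apply/edge_idealP => m; rewrite mcoeffD.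
  have [/eqP rm0|/Ir] := boolP (r@_m == 0); last first.
    by case/exists_inP=> e eE sub _; apply/exists_inP; exists e; rewrite ?inE ?eE.
  rewrite rm0 add0r mcoeffMXE lep1mP; case: ifP => [mj _|]; last by rewrite eqxx.
  by apply/exists_inP; exists [set j]; rewrite ?inE ?eqxx ?orbT // sub1set inE mj.
have [i0 [iD iM]] := edge_ideal_is_ideal E.
apply: (big_ind (fun x => exists r s, @edge_ideal n K E r /\ x = r + s * 'X_j)).
- by exists 0, 0; rewrite mul0r addr0.
- move=> _ _ [r1 [s1 [I1 ->]]] [r2 [s2 [I2 ->]]].
  by exists (r1 + r2), (s1 + s2); rewrite mulrDl addrACA; split; first exact: iD.
move=> e; rewrite in_setU in_set1 => /orP[eE|/eqP ->].
  exists (q e * \prod_(i in e) 'X_i), 0; rewrite mul0r addr0; split=> //.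
  exists (fun f => if f == e then q e else 0).
  rewrite (bigD1 e) //= eqxx [X in _ + X]big1 ?addr0 // => f /andP[_ /negbTE ->].
  by rewrite mul0r.
by exists 0, (q [set j]); rewrite big_set1 add0r.
Qed.

End MonomialIdeals.

Section PrimeFiltrations.
Variables (n : nat) (K : fieldType).
Local Notation S := {mpoly K[n]}.
Implicit Types (I : S -> Prop) (J : nat -> S -> Prop).

Lemma fdepth_ge_ext I I' k :
  (forall p, I p <-> I' p) -> fdepth_ge I k -> fdepth_ge I' k.
Proof. by move=> II' [m [J [J0 filt]]]; exists m, J; split=> // p; rewrite J0 II'. Qed.

Lemma fdepth_ge_weaken I k k' : (k <= k')%N -> fdepth_ge I k' -> fdepth_ge I k.
Proof.
move=> le_kk' [m [J [J0 [Jm [Jid [Jinc Jstep]]]]]]; exists m, J; do 4! split=> //.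
by move=> i /Jstep [Q [a [step dimQ]]]; exists Q, a; split; last exact: leq_trans dimQ.
Qed.

Lemma fdepth_ge_unit I k :
  is_ideal I -> is_graded I -> (forall p, I p) -> fdepth_ge I k.
Proof. by move=> Iideal Igraded Iall; exists 0%N, (fun _ => I). Qed.

Lemma filtration_step_ext J J' i i' Q a :
  (forall p, J i p <-> J' i' p) -> (forall p, J i.+1 p <-> J' i'.+1 p) ->
  filtration_step J' i' Q a -> filtration_step J i Q a.
Proof.
move=> Ji Ji1 [stepD stepC]; split=> p; last by rewrite Ji stepC.
rewrite Ji1 stepD; split=> -[r [s [Jr ->]]]; exists r, s; split=> //; exact/Ji.
Qed.

(* The short exact sequence 0 -> S/(I : x_j)(-e_j) -> S/I -> S/(I + (x_j)) -> 0:
   a filtration J2 of S/(I : x_j) multiplied by x_j, followed by a filtration J1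
   of S/(I + (x_j)), is a filtration of S/I. *)
Section Splice.
Variables (I : S -> Prop) (j : 'I_n) (k : nat).
Hypotheses (I_ideal : is_ideal I) (I_graded : is_graded I).
Variables (m1 m2 : nat) (J1 J2 : nat -> S -> Prop).
Hypothesis J1_filt :
  prime_filtration_depth_ge (fun p => exists r s, I r /\ p = r + s * 'X_j) m1 J1 k.
Hypothesis J2_filt : prime_filtration_depth_ge (fun p => I ('X_j * p)) m2 J2 k.

Definition lift_filtration i p := exists r t, I r /\ J2 i t /\ p = r + 'X_j * t.

Definition splice i := if (i <= m2)%N then lift_filtration i else J1 (i - m2).

Lemma J2_of_colon i p : (i <= m2)%N -> I ('X_j * p) -> J2 i p.
Proof.
have [J20 [_ [_ [J2inc _]]]] := J2_filt.
elim: i p => [|i IHi] p le_im2 Ip; first exact/J20.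
by apply: J2inc => //; apply: IHi => //; apply: ltnW.
Qed.

Lemma lift_filtration0 p : lift_filtration 0 p <-> I p.
Proof.
have [[I0 [ID _]] [J20 _]] := (I_ideal, J2_filt).
split=> [[r [t [Ir [/J20 It ->]]]]|Ip]; first exact: ID.
by exists p, 0; rewrite mulr0 addr0; split=> //; split=> //; apply/J20; rewrite mulr0.
Qed.

Lemma lift_filtration_last p : lift_filtration m2 p <-> J1 0 p.
Proof.
have [[J10 _] [_ [J2m _]]] := (J1_filt, J2_filt); rewrite J10.
split=> [[r [t [Ir [_ ->]]]]|[r [s [Ir ->]]]]; first by exists r, t; rewrite mulrC.
by exists r, s; rewrite [s * _]mulrC.
Qed.

Lemma lift_filtration_ideal i :
  (i <= m2)%N -> is_ideal (lift_filtration i) /\ is_graded (lift_filtration i).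
Proof.
move=> le_im2; have [[I0 [ID IM]] [_ [_ [J2id _]]]] := (I_ideal, J2_filt).
have [[T0 [TD TM]] Tgraded] := J2id i le_im2.
split; first split.
- by exists 0, 0; rewrite mulr0 addr0.
split=> [p q [r1 [t1 [? [? ->]]]] [r2 [t2 [? [? ->]]]]|s p [r [t [? [? ->]]]]].
  exists (r1 + r2), (t1 + t2); rewrite mulrDr addrACA.
  by split; [exact: ID | split; first exact: TD].
exists (s * r), (s * t); rewrite mulrDr mulrCA.
by split; [exact: IM | split; first exact: TM].
move=> p m [r [t [Ir [Jt ->]]]]; rewrite mcoeffD scalerDl mulrC mcoeffMXE lep1mP.
exists (r@_m *: 'X_[m]).
exists (if (m j != 0)%N then t@_(m - U_(j)) *: 'X_[m - U_(j)] else 0).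
split; first exact: I_graded.
case: ifP => mj; split; [exact: Tgraded | | exact: T0 | by rewrite scale0r mulr0].
by rewrite -scalerAr -mpolyXD addmC submK // lep1mP.
Qed.

Lemma lift_filtration_step i : (i < m2)%N ->
  exists Q a, filtration_step lift_filtration i Q a /\ (k <= dim_quot_mon_prime Q)%N.
Proof.
move=> lt_im2; have [_ [_ [J2id [_ J2step]]]] := J2_filt.
have [Q [a [[stepD stepC] dimQ]]] := J2step i lt_im2.
exists Q, (a + U_(j))%MM; split=> //; split=> p.
  split=> [[r [t [Ir [/stepD [t' [s [Jt' ->]]] ->]]]]|[q [s [[r [t [Ir [Jt ->]]]] ->]]]].
    by exists (r + 'X_j * t'), s; split; [exists r, t' | rewrite mpolyXD; ring].
  exists r, (t + s * 'X_[a]); split=> //; split; first by apply/stepD; exists t, s.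
  by rewrite mpolyXD; ring.
have [[_ [TD _]] _] := J2id i (ltnW lt_im2).
split=> [[r [t [Ir [Jt pXaj]]]]|/stepC Jt]; last first.
  exists 0, (p * 'X_[a]); split; first by case: I_ideal.
  by split=> //; rewrite mpolyXD; ring.
apply/stepC; rewrite -(subrK t (p * 'X_[a])); apply: TD => //.
apply: J2_of_colon; first exact: ltnW.
suff -> : 'X_j * (p * 'X_[a] - t) = r by [].
by apply: (addIr ('X_j * t)); rewrite -pXaj mpolyXD; ring.
Qed.

Lemma splice_filtration : prime_filtration_depth_ge I (m2 + m1) splice k.
Proof.
have [J10 [J1m [J1id [J1inc J1step]]]] := J1_filt.
have liftinc i p : (i < m2)%N -> lift_filtration i p -> lift_filtration i.+1 p.
  have [_ [_ [_ [J2inc _]]]] := J2_filt.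
  by move=> lt_im2 [r [t [Ir [Jt ->]]]]; exists r, t; split=> //; split=> //; apply: J2inc.
split; first by move=> p; rewrite /splice leq0n lift_filtration0.
split.
  move=> p; rewrite /splice; case: ifP => [le_m2|_]; last by rewrite addKn.
  have m10 : m1 = 0%N by lia.
  by move: (J1m p); rewrite m10 addn0 => /lift_filtration_last.
split.
  move=> i le_i; rewrite /splice; case: ifP => [le_im2|_]; first exact: lift_filtration_ideal.
  by apply: J1id; lia.
split.
  move=> i p lt_i; rewrite /splice; case: ifP => le_im2; case: ifP => le_i1m2.
  - exact: liftinc.
  - have -> : i = m2 by lia.
    by rewrite subSnn => /lift_filtration_last; apply: J1inc; lia.
  - lia.
  - by rewrite subSn; [apply: J1inc; lia | lia].
move=> i lt_i; have [lt_im2|le_m2i] := ltnP i m2.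
  have [Q [a [step dimQ]]] := lift_filtration_step lt_im2.
  exists Q, a; split=> //; apply: filtration_step_ext step => p.
    by rewrite /splice (ltnW lt_im2).
  by rewrite /splice lt_im2.
have [Q [a [step dimQ]]] := J1step (i - m2)%N (ltac:(lia)).
exists Q, a; split=> //; apply: filtration_step_ext step => p; rewrite /splice.
  case: ifP => [le_im2|_] //; have -> : i = m2 by lia.
  by rewrite subnn lift_filtration_last.
by rewrite ltnNge le_m2i subSn.
Qed.

End Splice.

Lemma fdepth_ge_colon_sum I j k :
  is_ideal I -> is_graded I ->
  fdepth_ge (fun p => I ('X_j * p)) k ->
  fdepth_ge (fun p => exists r s, I r /\ p = r + s * 'X_j) k ->
  fdepth_ge I k.
Proof.
move=> Iideal Igraded [m2 [J2 J2_filt]] [m1 [J1 J1_filt]].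
exists (m2 + m1)%N; eexists; exact: (splice_filtration Iideal Igraded J1_filt J2_filt).
Qed.

End PrimeFiltrations.

Section EdgeIdeals.
Variables (n : nat) (K : fieldType).
Implicit Types (E G X : {set {set 'I_n}}).

Lemma edge_ideal_minimal_sets X p :
  @edge_ideal n K (minimal_sets X) p <-> @edge_ideal n K X p.
Proof.
rewrite !edge_idealP; split=> divp m /divp /exists_inP[e eX sub]; apply/exists_inP.
  by exists e => //; apply: minimal_sets_sub.
have [f fmin fe] := minimal_sets_exists eX.
by exists f => //; apply: subset_trans fe sub.
Qed.

Lemma fdepth_ge_colon_chain G (ys : seq 'I_n) k :
  (forall pre y suf, ys = pre ++ y :: suf ->
     fdepth_ge (@edge_ideal n K (contract (adjoin_singletons G pre) y)) k) ->
  fdepth_ge (@edge_ideal n K (adjoin_singletons G ys)) k ->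
  fdepth_ge (@edge_ideal n K G) k.
Proof.
elim: ys G => [|y ys IHys] G colon_ge; first by rewrite adjoin_singletons_nil.
rewrite adjoin_singletons_cons => sum_ge.
apply: (fdepth_ge_colon_sum (j := y)).
- exact: edge_ideal_is_ideal.
- exact: edge_ideal_graded.
- apply: fdepth_ge_ext (colon_ge [::] y ys erefl) => p.
  by rewrite adjoin_singletons_nil edge_ideal_colon.
apply: fdepth_ge_ext (fun p => iff_sym (edge_ideal_addX G y p)) _.
apply: IHys sum_ge => pre y' suf ys_def; rewrite -adjoin_singletons_cons.
by apply: (colon_ge (y :: pre) y' suf); rewrite ys_def.
Qed.

Lemma fdepth_ge_mon_prime (Q : {set 'I_n}) :
  fdepth_ge (@mon_prime n K Q) (dim_quot_mon_prime Q).
Proof.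
have Pideal : is_ideal (@mon_prime n K Q) by apply: monomial_ideal_is_ideal.
have Pgraded := is_graded_support (@mon_primeP n K Q).
exists 1%N, (fun i => if i == 0%N then @mon_prime n K Q else fun=> True).
split=> //; split=> //; split.
  by case=> [|[|]] //= _; do !split.
split=> [[]|] // [] // _; exists Q, 0%MM; split=> //.
split=> p /=; last by rewrite mpolyX0 mulr1.
split=> // _; exists 0, p; rewrite mpolyX0 mulr1 add0r.
by split=> //; case: Pideal.
Qed.

Lemma edge_ideal_singletons E p :
  (forall e, e \in E -> #|e| = 1%N) -> @edge_ideal n K E p <-> @mon_prime n K (Vred E) p.
Proof.
move=> E1; rewrite edge_idealP mon_primeP; split=> divp m /divp.
  case/exists_inP=> e eE /subsetP sub; have /cards1P[x ex] : #|e| == 1%N by rewrite E1.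
  apply/exists_inP; exists x; last by have := sub x; rewrite ex inE eqxx => /(_ isT); rewrite inE.
  by apply/bigcupP; exists e; rewrite // ex inE.
case/exists_inP=> x /bigcupP[e eE xe] mx; apply/exists_inP; exists e => //.
have /cards1P[x' ex'] : #|e| == 1%N by rewrite E1.
by move: xe; rewrite ex' sub1set !inE => /eqP<-.
Qed.

Lemma epsilon_singletons E : (forall e, e \in E -> #|e| = 1%N) -> epsilon E = 0%N.
Proof.
move=> E1; suff /epsilon_le : edgewise_dominant E set0 by rewrite cards0 leqn0 => /eqP.
rewrite /edgewise_dominant sub0set.
apply/forall_inP => v /bigcupP[e eE ve]; apply/implyP => /andP[_].
have /cards1P[x ex] : #|e| == 1%N by rewrite E1.
by move: ve; rewrite ex inE => /eqP ->; rewrite -ex eE.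
Qed.

Lemma fdepth_ge_edge_ideal_small E : (forall e, e \in E -> #|e| <= 1)%N ->
  fdepth_ge (@edge_ideal n K E) (epsilon E + n - #|Vred E|).
Proof.
move=> E_small; have [E0|nE0] := boolP (set0 \in E).
  apply: fdepth_ge_unit; [exact: edge_ideal_is_ideal | exact: edge_ideal_graded |].
  by move=> p; apply/edge_idealP => m _; apply/exists_inP; exists set0; rewrite ?sub0set.
have E1 e : e \in E -> #|e| = 1%N.
  move=> eE; apply/eqP; rewrite eqn_leq E_small //= card_gt0.
  by apply: contraNneq nE0 => <-.
rewrite epsilon_singletons // add0n.
apply: fdepth_ge_ext (fun p => iff_sym (edge_ideal_singletons p E1)) _.
exact: fdepth_ge_mon_prime.
Qed.

End EdgeIdeals.

Local Close Scope ring_scope.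

Section Reduction.
Variables (n : nat) (E : {set {set 'I_n}}) (v : 'I_n).

Section Contraction.
Variables (pre : seq 'I_n) (y : 'I_n).
Hypotheses (pre_nb : forall z, z \in pre -> neighbors E v z) (y_nb : neighbors E v y).
Local Notation C := (minimal_sets (contract (adjoin_singletons E pre) y)).

Lemma refines_contraction : refines C E.
Proof.
have preE : {subset pre <= Vred E}.
  by move=> z /pre_nb /neighbors_edge[e eE /andP[_ ze]]; apply/bigcupP; exists e.
exact: refines_trans (minimal_sets_refines _)
  (refines_trans (contract_refines _ _) (adjoin_singletons_refines preE)).
Qed.

Lemma nontrivial_vertices_contraction :
  #|nontrivial_vertices C| < #|nontrivial_vertices E|.
Proof.
have [es esE /andP[ves yes]] := neighbors_edge y_nb.
apply: (@nontrivial_vertices_lt _ _ _ y); last first.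
  apply/bigcupP; exists es; rewrite // esE.
  by apply/card_gt1P; exists v, y; rewrite ves yes (neighbors_neq y_nb).
apply/subsetP => x /bigcupP[_ /andP[/minimal_sets_sub /imsetP[g gG ->] big] xg].
case/setUP: gG => [gE|/imsetP[z _ gz]]; last first.
  exfalso; move: big; rewrite gz ltnNge => /negP; apply.
  by apply: leq_trans (subset_leq_card (subD1set _ _)) _; rewrite cards1.
move: xg; rewrite !inE => /andP[-> xg] /=; apply/bigcupP; exists g => //.
by rewrite gE (leq_trans big) ?subset_leq_card ?subD1set.
Qed.

Lemma epsilon_contraction : epsilon E + #|Vred C| <= epsilon C + #|Vred E|.
Proof.
have [es esE /andP[ves yes]] := neighbors_edge y_nb.
apply: (@epsilon_transfer _ _ _ es y refines_contraction esE yes).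
  apply: contra (@notin_Vred_contract _ (adjoin_singletons E pre) y).
  exact: (subsetP (Vred_refines (minimal_sets_refines _))).
move=> w /minimal_sets_sub /imsetP[g /setUP[gE|/imsetP[z zpre ->]] gw] wE.
  have yg : y \in g.
    apply: contraNT wE => yg; rewrite gw; suff -> : g :\ y = g by [].
    by apply/setP => x; rewrite !inE; case: eqVneq => // ->; rewrite (negbTE yg).
  have : w \in g :\ y by rewrite -gw set11.
  rewrite !inE => /andP[wy wg]; exists y => //.
  by rewrite /neighbors wy; apply/exists_inP; exists g; rewrite // wg.
have : w \in [set z] :\ y by rewrite -gw set11.
by rewrite !inE => /andP[_ /eqP ->]; exists v => //; apply/neighbors_sym/pre_nb.
Qed.

End Contraction.

Section Isolation.
Variable e0 : {set 'I_n}.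
Hypothesis E_antichain : forall e f, e \in E -> f \in E -> e \subset f -> e = f.
Hypotheses (e0E : e0 \in E) (ve0 : v \in e0) (e0_big : 1 < #|e0|).
Local Notation Y := (enum [set w | neighbors E v w]).
Local Notation C := (minimal_sets (adjoin_singletons E Y)).

Lemma refines_isolation : refines C E.
Proof.
have YE : {subset Y <= Vred E}.
  move=> z; rewrite mem_enum inE => /neighbors_edge[e eE /andP[_ ze]].
  by apply/bigcupP; exists e.
exact: refines_trans (minimal_sets_refines _) (adjoin_singletons_refines YE).
Qed.

Lemma isolated_in_isolation : v \notin Vred C.
Proof.
apply/bigcupP => -[c cC vc]; have /setUP[cE|/imsetP[z]] := minimal_sets_sub cC; last first.
  by rewrite mem_enum inE => /neighbors_neq vz cz; move: vc; rewrite cz inE (negbTE vz).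
have [c_v|/subsetPn[z zc zv]] := boolP (c \subset [set v]).
  have c_e0 : c = e0 by apply: E_antichain; rewrite // (subset_trans c_v) ?sub1set.
  have := subset_leq_card c_v; rewrite cards1 c_e0.
  by rewrite leqNgt e0_big.
have vz : neighbors E v z.
  rewrite /neighbors eq_sym; apply/andP; split; first by rewrite inE in zv.
  by apply/exists_inP; exists c; rewrite // vc zc.
have zC : [set z] \in adjoin_singletons E Y.
  by apply/setUP; right; apply: imset_f; rewrite mem_enum inE.
have cz := minimal_sets_min cC zC; rewrite sub1set zc in cz.
by move: vc; rewrite -(cz isT) inE (negbTE (neighbors_neq vz)).
Qed.

Lemma nontrivial_vertices_isolation :
  #|nontrivial_vertices C| < #|nontrivial_vertices E|.
Proof.
apply: (@nontrivial_vertices_lt _ _ _ v); last by apply/bigcupP; exists e0; rewrite ?e0E.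
apply/subsetP => x /bigcupP[c /andP[cC big] xc].
have xv : x != v.
  apply: contraNneq isolated_in_isolation => xv.
  by apply/bigcupP; exists c; rewrite // -xv.
rewrite !inE xv; apply/bigcupP; exists c; rewrite // big andbT.
have /setUP[// | /imsetP[z _ cz]] := minimal_sets_sub cC.
by move: big; rewrite cz cards1.
Qed.

Lemma epsilon_isolation : epsilon E + #|Vred C| <= epsilon C + #|Vred E|.
Proof.
apply: (epsilon_transfer refines_isolation e0E ve0 isolated_in_isolation).
move=> w /minimal_sets_sub /setUP[wE' wE|/imsetP[z zY /set1_inj ->] _].
  by rewrite wE' in wE.
by exists v => //; apply: neighbors_sym; move: zY; rewrite mem_enum inE.
Qed.

End Isolation.
End Reduction.

Section MainInduction.
Variables (n : nat) (K : fieldType).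

Lemma fdepth_ge_edge_ideal (E : {set {set 'I_n}}) : is_clutter setT E ->
  fdepth_ge (@edge_ideal n K E) (epsilon E + n - #|Vred E|).
Proof.
elim: {E}_.+1 {-2}E (ltnSn #|nontrivial_vertices E|) => // N IHN E ltN [_ E_antichain].
have [e0 /andP[e0E e0_big]|E_small] := pickP [pred e in E | 1 < #|e|]; last first.
  apply: fdepth_ge_edge_ideal_small => e eE; rewrite leqNgt; apply/negbT.
  by have := E_small e; rewrite /= eE.
have [v ve0] : exists v, v \in e0 by apply/card_gt0P; apply: ltnW.
have reduce C : is_clutter setT C ->
    #|nontrivial_vertices C| < #|nontrivial_vertices E| ->
    epsilon E + #|Vred C| <= epsilon C + #|Vred E| ->
    fdepth_ge (@edge_ideal n K C) (epsilon E + n - #|Vred E|).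
  move=> clC ltC le_eps; apply: fdepth_ge_weaken (IHN C _ clC); last lia.
  by have := card_Vred_le C; have := card_Vred_le E; lia.
apply: (@fdepth_ge_colon_chain _ _ _ (enum [set w | neighbors E v w])).
  move=> pre y suf Ydef.
  have nb z : z \in pre ++ y :: suf -> neighbors E v z by rewrite -Ydef mem_enum inE.
  have pre_nb z : z \in pre -> neighbors E v z by move=> zp; apply: nb; rewrite mem_cat zp.
  have y_nb : neighbors E v y by apply: nb; rewrite mem_cat inE eqxx orbT.
  apply: fdepth_ge_ext (fun p => edge_ideal_minimal_sets _ p) _.
  apply: reduce; first exact: minimal_sets_clutter.
    exact: nontrivial_vertices_contraction y_nb.
  exact: epsilon_contraction pre_nb y_nb.
apply: fdepth_ge_ext (fun p => edge_ideal_minimal_sets _ p) _.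
apply: reduce; first exact: minimal_sets_clutter.
  by apply: (nontrivial_vertices_isolation (e0 := e0)).
by apply: (epsilon_isolation (e0 := e0)).
Qed.

End MainInduction.

Theorem theorem3p6 (K : fieldType) (n : nat)
    (V : {set 'I_n}) (E : {set {set 'I_n}}) :
  is_clutter V E ->
  fdepth_ge (@edge_ideal n K E) (epsilon E + n - #|Vred E|).
Proof.
case=> _ E_antichain; apply: fdepth_ge_edge_ideal.
by split=> // e _; apply: subsetT.
Qed.
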